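(* Let $G=(V,E)$ be a connected undirected graph on $n\geq 3$ nodes with positive edge weights $w$, and run the distributed algorithm described in the context synchronously at every node. Then every node $v\in V$ computes its betweenness centrality after $2\,\mathcal{D}(G)+1$ phases: at any time after the first $2\,\mathcal{D}(G)+1$ phases have been completed, the variable $C$ held by $v$ equals $\sum_{s\neq v}\mathsf{bc}_v(s)=(n-1)(n-2)\,\mathsf{bc}_v$, i.e. $\mathsf{bc}_v$ up to the normalization factor $1/((n-1)(n-2))$.
   Context: Graph notions. $G=(V,E)$ is connected, undirected, with weights $w(e)>0$; $N(v)$ is the set of neighbors of $v$ and $N[v]=N(v)\cup\{v\}$. The length of a path is the sum of its edge weights; $\mathrm{dist}(s,t)$ is the length of a shortest $s$–$t$ path. For $s\neq t$, $\mathrm{maxhop}(s,t)$ is the maximum number of edges of a shortest (minimum-length) $s$–$t$ path, $\mathrm{maxhop}(s,s)=0$, and $\mathcal{D}(G)=\max_{s,t\in V}\mathrm{maxhop}(s,t)$. $\sigma_{s,t}$ is the number of shortest $s$–$t$ paths ($\sigma_{s,s}=1$) and $\sigma_{s,t}(v)$ the number of those passing through $v$ ($\sigma_{s,s}(s)=1$). For $s\in V$, $\mathsf{bc}_v(s)=\sum_{t\neq v}\sigma_{s,t}(v)/\sigma_{s,t}$, and the betweenness centrality is $\mathsf{bc}_v=\frac{1}{(n-1)(n-2)}\sum_{s\neq v,t\neq v}\sigma_{s,t}(v)/\sigma_{s,t}$. Algorithm (at each node $v$). Initialization: for all $t\in V$: $D[t]=+\infty$, $\mathrm{NH}[t]=\mathrm{PH}[t]=\emptyset$,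 and for all $u\in N[v]$: $B[u,t]=0$, $S[u,t]=0$; then $S[v,v]=1$, $D[v]=0$. Execution proceeds in synchronous phases; in each phase every node $v$ sends, for every $t\in V$, the message $(t,D[t],S[v,t],B[v,t])$ to every neighbor, receives all messages sent to it by its neighbors in that phase, and processes each of them (in arbitrary order) as follows. On receipt of $(t,d,s,b)$ from $u\in N(v)$: remove $u$ from $\mathrm{NH}[t]$ and from $\mathrm{PH}[t]$; if $d+w(\{u,v\})<D[t]$ set $D[t]\leftarrow d+w(\{u,v\})$; else if $d+w(\{u,v\})=D[t]$ add $u$ to $\mathrm{NH}[t]$; else if $d-w(\{u,v\})=D[t]$ add $u$ to $\mathrm{PH}[t]$. Then set $S[u,t]\leftarrow s$, $B[u,t]\leftarrow b$; if $t\neq v$ set $S[v,t]\leftarrow\sum_{x\in\mathrm{NH}[t]}S[x,t]$; set $B[v,t]\leftarrow S[v,t]\cdot\sum_{x\in\mathrm{PH}[t]}\frac{B[x,t]+1}{S[x,t]}$ (a term with $S[x,t]=0$ is taken as $0$); finally set $C\leftarrow\sum_{x\neq v}B[v,x]$. *)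

From HB Require Import structures.
From mathcomp Require Import all_boot all_order all_algebra.
From mathcomp Require Import constructive_ereal.
Set Implicit Arguments. Unset Strict Implicit. Unset Printing Implicit Defensive.
Import Order.TTheory GRing.Theory Num.Theory.
Local Open Scope ring_scope.

Section Graph.
Variables (R : realFieldType) (V : finType) (adj : rel V) (w : V -> V -> R).

(** A (simple) path from s is represented by the list p of the vertices
    following s; the full vertex sequence is s :: p. *)
Definition is_spath (s t : V) (p : seq V) : bool :=
  [&& path adj s p, last s p == t & uniq (s :: p)].

Definition plen (s : V) (p : seq V) : R :=
  \sum_(e <- zip (s :: p) p) w e.1 e.2.

Fixpoint allseqs (k : nat) : seq (seq V) :=
  if k is k'.+1 then [::] :: [seq x :: p | x <- enum V, p <- allseqs k']
  else [:: [::]].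

(** All simple s-t paths (simple paths have at most #|V| vertices). *)
Definition spaths (s t : V) : seq (seq V) :=
  undup [seq p <- allseqs #|V| | is_spath s t p].

Definition shortest_paths (s t : V) : seq (seq V) :=
  [seq p <- spaths s t | all (fun q => plen s p <= plen s q) (spaths s t)].

Definition sigma (s t : V) : nat := size (shortest_paths s t).
Definition sigma_through (s t v : V) : nat :=
  count (fun p => v \in s :: p) (shortest_paths s t).

Definition maxhop (s t : V) : nat := \max_(p <- shortest_paths s t) size p.
Definition diamD : nat := \max_(s : V) \max_(t : V) maxhop s t.

Definition bcs (v s : V) : R :=
  \sum_(t | t != v) ((sigma_through s t v)%:R / (sigma s t)%:R).
Definition bc (v : V) : R :=
  (((#|V| - 1) * (#|V| - 2))%:R)^-1 *
  \sum_(s | s != v) \sum_(t | t != v) ((sigma_through s t v)%:R / (sigma s t)%:R).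

Local Open Scope ereal_scope.

Record nstate := NState {
  Dv  : V -> \bar R;
  NHv : V -> {set V};
  PHv : V -> {set V};
  Sv  : V -> V -> R;
  Bv  : V -> V -> R;
  Cv  : R
}.

Definition init_state (C0 : V -> R) (v : V) : nstate :=
  NState (fun t => if t == v then 0%E else +oo)
         (fun _ => set0) (fun _ => set0)
         (fun u t => if (u == v) && (t == v) then 1%R else 0%R)
         (fun _ _ => 0%R) (C0 v).

Definition process (v u t : V) (d : \bar R) (s b : R) (st : nstate) : nstate :=
  let wuv := (w u v)%:E in
  let NH1 := NHv st t :\ u in
  let PH1 := PHv st t :\ u in
  let Dt := Dv st t in
  let '(Dt2, NH2, PH2) :=
    if d + wuv < Dt then (d + wuv, NH1, PH1)
    else if d + wuv == Dt then (Dt, u |: NH1, PH1)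
    else if d - wuv == Dt then (Dt, NH1, u |: PH1)
    else (Dt, NH1, PH1) in
  let D' := fun a => if a == t then Dt2 else Dv st a in
  let NH' := fun a => if a == t then NH2 else NHv st a in
  let PH' := fun a => if a == t then PH2 else PHv st a in
  let S1 := fun x y => if (x == u) && (y == t) then s else Sv st x y in
  let B1 := fun x y => if (x == u) && (y == t) then b else Bv st x y in
  let S2 := if t != v then
              (fun x y => if (x == v) && (y == t)
                          then (\sum_(x' in NH2) S1 x' t)%R else S1 x y)
            else S1 in
  let Bvt := (S2 v t * \sum_(x' in PH2)
                 (if S2 x' t == 0%R then 0%R else (B1 x' t + 1) / S2 x' t))%R in
  let B2 := fun x y => if (x == v) && (y == t) then Bvt else B1 x y in
  NState D' NH' PH' S2 B2 (\sum_(x | x != v) B2 v x)%R.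

Definition inbox (v : V) : seq (V * V) :=
  [seq ut <- [seq (u, t) | u <- enum V, t <- enum V] | adj v ut.1].

(** One synchronous phase at node v: all messages are those sent by the
    neighbours from their states at the beginning of the phase; they are
    processed in the order [ord] (an arbitrary ordering of the inbox). *)
Definition phase_node (net : V -> nstate) (v : V) (ord : seq (V * V)) : nstate :=
  foldl (fun st ut =>
           let u := ut.1 in let t := ut.2 in
           process v u t (Dv (net u) t) (Sv (net u) u t) (Bv (net u) u t) st)
        (net v) ord.

Fixpoint run (C0 : V -> R) (sched : nat -> V -> seq (V * V)) (k : nat)
  : V -> nstate :=
  if k is k'.+1 then
    let net := run C0 sched k' in fun v => phase_node net v (sched k' v)
  else init_state C0.

End Graph.

From HB Require Import structures.
From mathcomp Require Import all_boot all_order all_algebra.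
From mathcomp Require Import constructive_ereal.
From mathcomp Require Import ring lra zify.
Set Implicit Arguments. Unset Strict Implicit. Unset Printing Implicit Defensive.
Import Order.TTheory GRing.Theory Num.Theory.
Local Open Scope ring_scope.

(* At a node v, D[t] after k phases lies between dist(v,t) and the length of
   every v-t path with at most k edges, so it is exact from phase maxhop(v,t)
   on; from then on NH[t] and PH[t] are the neighbours x with
   dist(x,t) + w = dist(v,t) (next hops towards t) and dist(x,t) - w = dist(v,t)
   (previous hops).  Splitting shortest s-t paths at their first edge gives
   sigma(s,t) = sum_(u next hop) sigma(u,t), which the S update computes, and
   splitting them at the edge entering v gives Brandes' recursion
     delta_t(v) = sigma(v,t) * sum_(x prev hop) (delta_t(x) + 1) / sigma(x,t)
   for delta_t(v) = sum_s sigma_(s,t)(v) / sigma(s,t), which the B update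
   computes.  Since maxhop grows along previous hops, B[v,t] = delta_t(v) after
   2D + 2 - maxhop(v,t) phases, so after 2D + 1 phases for all t <> v, and then
   C = sum_t delta_t(v) = sum_s bc_v(s). *)

Lemma mem_zip (T1 T2 : eqType) (s1 : seq T1) (s2 : seq T2) x y :
  (x, y) \in zip s1 s2 -> (x \in s1) && (y \in s2).
Proof.
elim: s1 s2 => [|a s1 IH] [|b s2] //=.
rewrite inE => /orP [/eqP [-> ->]|/IH /andP [h1 h2]]; first by rewrite !inE !eqxx.
by rewrite !inE h1 h2 !orbT.
Qed.

Lemma seq_argmin (T : eqType) (R : realDomainType) (f : T -> R) (s : seq T) :
  s != [::] -> exists2 x, x \in s & all (fun y => f x <= f y) s.
Proof.
elim: s => [|a s IH] // _.
have [-> | /IH [x xs minx]] := eqVneq s [::].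
  by exists a; rewrite ?mem_head //= lexx.
have [lt_ax | le_xa] := ltrP (f a) (f x).
  exists a; first exact: mem_head.
  rewrite /= lexx; apply/allP => y ys; exact: le_trans (ltW lt_ax) (allP minx y ys).
by exists x; rewrite ?inE ?xs ?orbT //= le_xa.
Qed.

Section Process.
Variables (R : realFieldType) (V : finType) (w : V -> V -> R).
Variables (v u t : V) (d : \bar R) (s b : R) (st : nstate R V).
Local Notation P := (process w v u t d s b st).
Local Notation relaxes := (d + (w u v)%:E < Dv st t)%E.
Local Notation next_hop := (d + (w u v)%:E == Dv st t)%E.
Local Notation prev_hop := (d - (w u v)%:E == Dv st t)%E.

Ltac case_process :=
  rewrite /process; case: ifP => _; [| case: ifP => _; [| case: ifP => _]].

Lemma process_D a : Dv P a =
  if (a == t) && relaxes then (d + (w u v)%:E)%E else Dv st a.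
Proof. by case_process; rewrite /= ?andbT ?andbF //; case: eqP => [->|]. Qed.

Lemma process_NH a : NHv P a =
  if a == t then (if ~~ relaxes && next_hop then u |: NHv st t :\ u else NHv st t :\ u)
  else NHv st a.
Proof. by case_process; case: eqP => [->|]. Qed.

Lemma process_PH a : PHv P a =
  if a == t then
    (if [&& ~~ relaxes, ~~ next_hop & prev_hop] then u |: PHv st t :\ u else PHv st t :\ u)
  else PHv st a.
Proof. by case_process; case: eqP => [->|]. Qed.

Lemma process_S_neighbor x y : x != v ->
  Sv P x y = if (x == u) && (y == t) then s else Sv st x y.
Proof. by move=> xv; case_process; case: ifP; rewrite //= (negbTE xv). Qed.

Lemma process_S_self_other y : u != v -> y != t -> Sv P v y = Sv st v y.
Proof. by move=> uv yt; case_process; case: ifP; rewrite /= (negbTE yt) ?andbF. Qed.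

Lemma process_S_self_self : u != v -> Sv P v v = Sv st v v.
Proof.
move=> uv; case_process; case: ifP => /= [tv | /negbFE/eqP ->];
  by rewrite ?(eq_sym v t) ?(negbTE tv) ?andbF // (eq_sym v u) (negbTE uv).
Qed.

Lemma process_S_self_target : t != v ->
  Sv P v t = \sum_(x in NHv P t) (if x == u then s else Sv st x t).
Proof.
move=> tv; rewrite process_NH eqxx; case_process;
  by rewrite /= tv !eqxx; apply: eq_bigr => x _; rewrite andbT.
Qed.

Lemma process_B_neighbor x y : x != v ->
  Bv P x y = if (x == u) && (y == t) then b else Bv st x y.
Proof. by move=> xv; case_process; rewrite /= (negbTE xv). Qed.

Lemma process_B_self_other y : y != t -> Bv P v y = Bv st v y.
Proof. by move=> yt; case_process; rewrite /= eqxx (negbTE yt) /= andbF. Qed.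

Lemma process_B_self_target : Bv P v t = Sv P v t *
  \sum_(x in PHv P t) (if Sv P x t == 0 then 0
                      else ((if x == u then b else Bv st x t) + 1) / Sv P x t).
Proof.
rewrite process_PH eqxx; case_process;
  by rewrite /= !eqxx; congr (_ * _); apply: eq_bigr => x _; rewrite andbT.
Qed.

Lemma process_C : Cv P = \sum_(x | x != v) Bv P v x.
Proof. by case_process. Qed.

Lemma process_hops a x :
  x \in NHv P a :|: PHv P a -> (x == u) || (x \in NHv st a :|: PHv st a).
Proof.
rewrite process_NH process_PH; case: eqP => [-> | _]; last by move->; rewrite orbT.
by do 2!case: ifP => _; rewrite !inE; case: (x == u).
Qed.

End Process.

Section Graph.
Variables (R : realFieldType) (V : finType) (adj : rel V) (w : V -> V -> R).
Hypothesis adj_sym : symmetric adj.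
Hypothesis adj_irr : irreflexive adj.
Hypothesis w_sym : forall u v, adj u v -> w u v = w v u.
Hypothesis w_gt0 : forall u v, adj u v -> 0 < w u v.
Hypothesis adj_connected : forall s t, connect adj s t.

Local Notation plen := (plen w).
Local Notation SP := (shortest_paths adj w).
Local Notation sigma := (sigma adj w).
Local Notation sigma_through := (sigma_through adj w).
Local Notation maxhop := (maxhop adj w).
Local Notation diamD := (diamD adj w).

Lemma adj_neq x y : adj x y -> y != x.
Proof. by apply: contraTneq => ->; rewrite adj_irr. Qed.

Lemma plen0 s : plen s [::] = 0.
Proof. by rewrite /plen big_nil. Qed.

Lemma plen_cons s u p : plen s (u :: p) = w s u + plen u p.
Proof. by rewrite /plen big_cons. Qed.

Lemma plen_cat s p q : plen s (p ++ q) = plen s p + plen (last s p) q.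
Proof.
elim: p s => [|u p IH] s /=; first by rewrite plen0 add0r.
by rewrite !plen_cons IH addrA.
Qed.

Lemma plen_ge0 s p : path adj s p -> 0 <= plen s p.
Proof.
elim: p s => [|u p IH] s /=; first by rewrite plen0.
by case/andP=> su pu; rewrite plen_cons addr_ge0 ?IH ?ltW ?w_gt0.
Qed.

Lemma spath_suffix s t p x : is_spath adj s t p -> x \in p ->
  exists2 q, is_spath adj x t q & plen x q < plen s p.
Proof.
move=> + /splitPr xp; case: xp => p1 p2 /and3P [].
rewrite cat_path last_cat -cat_cons cat_uniq /= => /and3P [p1P e p2P] tE /and3P [_ _ xp2].
exists p2; first exact/and3P.
rewrite plen_cat plen_cons addrA ltrDr.
by rewrite ltr_wpDl ?plen_ge0 ?w_gt0.
Qed.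

Lemma mem_allseqs k p : (p \in allseqs V k) = (size p <= k)%N.
Proof.
elim: k p => [|k IH] [|x p] //=.
rewrite inE /= ltnS -IH; apply/allpairsP/idP => [[[y q] [_ qk [_ ->]]] //|pk].
by exists (x, p); rewrite mem_enum.
Qed.

Lemma mem_spaths s t p : (p \in spaths adj s t) = is_spath adj s t p.
Proof.
rewrite mem_undup mem_filter mem_allseqs andb_idr // => /and3P [_ _ /card_uniqP].
by move=> card_sp; have := max_card (mem (s :: p)); rewrite card_sp => /ltnW.
Qed.

Lemma spaths_neq_nil s t : spaths adj s t != [::].
Proof.
have /connectP [p pP ->] := adj_connected s t.
case: (shortenP pP) => q qP q_uniq _.
by apply/eqP=> sp0; have := mem_spaths s (last s q) q; rewrite sp0 /is_spath qP q_uniq eqxx.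
Qed.

Definition dist s t := plen s (head [::] (SP s t)).

Lemma sp_uniq s t : uniq (SP s t).
Proof. by rewrite filter_uniq ?undup_uniq. Qed.

Lemma sp_neq_nil s t : SP s t != [::].
Proof.
have [p sp_p minp] := seq_argmin (plen s) (spaths_neq_nil s t).
by apply/eqP => /(congr1 (fun l => p \in l)); rewrite mem_filter sp_p minp.
Qed.

Lemma head_sp s t : head [::] (SP s t) \in SP s t.
Proof. by case: (SP s t) (sp_neq_nil s t) => //= p l _; apply: mem_head. Qed.

Lemma sp_spath s t p : p \in SP s t -> is_spath adj s t p.
Proof. by rewrite mem_filter mem_spaths => /andP []. Qed.

Lemma sp_min s t p q : p \in SP s t -> is_spath adj s t q -> plen s p <= plen s q.
Proof. by rewrite mem_filter => /andP [/allP minp _] spq; rewrite minp ?mem_spaths. Qed.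

Lemma plen_sp s t p : p \in SP s t -> plen s p = dist s t.
Proof.
move=> sp_p; have sp_h := head_sp s t.
by apply/eqP; rewrite eq_le (sp_min sp_p (sp_spath sp_h)) (sp_min sp_h (sp_spath sp_p)).
Qed.

Lemma dist_le_spath s t q : is_spath adj s t q -> dist s t <= plen s q.
Proof. exact/sp_min/head_sp. Qed.

Lemma mem_sp s t p : (p \in SP s t) = is_spath adj s t p && (plen s p == dist s t).
Proof.
apply/idP/andP => [sp_p | [spp /eqP pE]]; first by rewrite (sp_spath sp_p) (plen_sp sp_p).
rewrite mem_filter mem_spaths spp andbT; apply/allP => q.
by rewrite mem_spaths pE; apply: dist_le_spath.
Qed.

Lemma dist_ge0 s t : 0 <= dist s t.
Proof. by have /sp_spath/and3P [+ _ _] := head_sp s t; apply: plen_ge0. Qed.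

Lemma spath_tt t p : is_spath adj t t p -> p = [::].
Proof.
case: p => // x p /and3P [_ /eqP tE /andP [+ _]].
by rewrite -{1}tE /= mem_last.
Qed.

Lemma sp_tt t : SP t t = [:: [::]].
Proof.
have sp_nil p : p \in SP t t -> p = [::] by move/sp_spath/spath_tt.
move: (sp_uniq t t) (sp_neq_nil t t) sp_nil.
case: (SP t t) => [|p [|q l]] //= => [_ _ /(_ p (mem_head _ _)) -> //|].
move=> /andP [pql _] _ sp_nil; move: pql.
by rewrite (sp_nil p) ?mem_head // (sp_nil q) ?inE ?eqxx ?orbT.
Qed.

Lemma dist_tt t : dist t t = 0.
Proof. by rewrite /dist sp_tt /= plen0. Qed.

Lemma dist_le_adj s u t : adj s u -> dist s t <= w s u + dist u t.
Proof.
move=> su; have sp_r := head_sp u t; set r := head _ _ in sp_r.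
have spr := sp_spath sp_r; rewrite -(plen_sp sp_r).
have [sr | sNr] := boolP (s \in r).
  have [q spq qr] := spath_suffix spr sr.
  by apply: le_trans (dist_le_spath spq) _; rewrite ler_wpDl ?ltW ?w_gt0.
have spur : is_spath adj s t (u :: r).
  case/and3P: spr => rP rt r_uniq.
  by rewrite /is_spath cons_uniq r_uniq /= su rP rt inE negb_or sNr eq_sym adj_neq.
by apply: le_trans (dist_le_spath spur) _; rewrite plen_cons.
Qed.

Lemma size_le_maxhop s t p : p \in SP s t -> (size p <= maxhop s t)%N.
Proof. by move=> sp_p; apply: leq_bigmax_seq sp_p _. Qed.

Lemma exists_sp_size_le_maxhop s t : exists2 p, p \in SP s t & (size p <= maxhop s t)%N.
Proof. by exists (head [::] (SP s t)); rewrite ?size_le_maxhop ?head_sp. Qed.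

Lemma maxhop_le_diam s t : (maxhop s t <= diamD)%N.
Proof. exact: leq_trans (leq_bigmax (F := maxhop s) t) (leq_bigmax s). Qed.

Lemma exists_neighbor v : (1 < #|V|)%N -> exists u, adj v u.
Proof.
rewrite -(cardsT V) (cardsD1 v) inE ltnS lt0n cards_eq0 => /set0Pn [y].
rewrite !inE => /andP [yv _].
have /connectP [[|u p] /= + yE] := adj_connected v y; first by rewrite -yE eqxx in yv.
by case/andP => vu _; exists u.
Qed.

Section Target.
Variable t : V.

Definition nexthops s := [set u | adj s u & dist u t + w u s == dist s t].
Definition prevhops v := [set x | adj v x & dist x t - w x v == dist v t].

Lemma nexthops_prevhops s v : (v \in nexthops s) = (s \in prevhops v).
Proof.
rewrite !inE adj_sym; have [vs /= | //] := boolP (adj v s).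
by rewrite (w_sym vs); apply/eqP/eqP => <-; lra.
Qed.

Lemma nexthop_adj s u : u \in nexthops s -> adj s u.
Proof. by rewrite inE => /andP []. Qed.

Lemma prevhop_adj v x : x \in prevhops v -> adj v x.
Proof. by rewrite inE => /andP []. Qed.

Lemma dist_nexthop_lt s u : u \in nexthops s -> dist u t < dist s t.
Proof. by rewrite inE => /andP [su /eqP <-]; rewrite ltrDl w_gt0 // adj_sym. Qed.

Lemma nexthops_tt : nexthops t = set0.
Proof.
apply/setP => u; rewrite in_set0; apply/negP => /dist_nexthop_lt.
by rewrite dist_tt ltNge dist_ge0.
Qed.

Lemma prevhop_neq s v : s \in prevhops v -> s != t.
Proof.
rewrite -nexthops_prevhops; apply: contraTneq => ->.
by rewrite nexthops_tt inE.
Qed.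

Lemma nexthop_notin_sp s u q : u \in nexthops s -> q \in SP u t -> s \notin u :: q.
Proof.
move=> nu sp_q; rewrite inE negb_or eq_sym adj_neq ?nexthop_adj //=.
apply/negP => /(spath_suffix (sp_spath sp_q)) [r spr].
rewrite (plen_sp sp_q) ltNge (le_trans (ltW (dist_nexthop_lt nu))) //.
exact: dist_le_spath.
Qed.

Lemma sp_cons s u q : u \in nexthops s -> q \in SP u t -> u :: q \in SP s t.
Proof.
move=> nu sp_q; have /and3P [qP qt q_uniq] := sp_spath sp_q.
have su := nexthop_adj nu.
rewrite mem_sp /is_spath cons_uniq (nexthop_notin_sp nu sp_q) q_uniq /= su qP qt.
move: nu; rewrite plen_cons (plen_sp sp_q) inE (w_sym su) => /andP [_ /eqP <-].
by rewrite addrC eqxx.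
Qed.

Lemma sp_consE s p : s != t -> p \in SP s t ->
  exists u q, [/\ p = u :: q, u \in nexthops s & q \in SP u t].
Proof.
move=> st sp_p; have /and3P [pP /eqP pt p_uniq] := sp_spath sp_p.
case: p pt pP p_uniq sp_p => [/= ts | u q /= qt /andP [su qP] /andP [_ q_uniq] sp_p].
  by rewrite ts eqxx in st.
have spq : is_spath adj u t q by rewrite /is_spath qP qt eqxx.
have := plen_sp sp_p; rewrite plen_cons => distE.
have := dist_le_spath spq; have := dist_le_adj t su => le1 le2.
have qE : plen u q = dist u t by lra.
exists u, q; split => //; last by rewrite mem_sp spq qE eqxx.
by rewrite inE su -(w_sym su); apply/eqP; lra.
Qed.

Lemma perm_sp_nexthops s : s != t ->
  perm_eq (SP s t) [seq u :: q | u <- enum (nexthops s), q <- SP u t].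
Proof.
move=> st; apply: uniq_perm (sp_uniq s t) _ _.
  apply: allpairs_uniq_dep; [exact: enum_uniq | by move=> u _; apply: sp_uniq |].
  by move=> [u q] [u' q'] _ _ /= [-> ->].
move=> p; apply/idP/allpairsPdep => [sp_p | [u [q [nu sp_q ->]]]].
  by have [u [q [-> nu sp_q]]] := sp_consE st sp_p; exists u, q; rewrite mem_enum.
by apply: sp_cons; rewrite // -mem_enum.
Qed.

Lemma count_sp_nexthops (P : pred (seq V)) s : s != t ->
  count P (SP s t) = (\sum_(u in nexthops s) count (fun q => P (u :: q)) (SP u t))%N.
Proof.
move=> st; rewrite (permP (perm_sp_nexthops st)) count_flatten sumnE !big_map big_enum.
by apply: eq_bigr => u _; rewrite count_map.
Qed.

Lemma sigma_nexthops s : s != t -> sigma s t = (\sum_(u in nexthops s) sigma u t)%N.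
Proof. by move=> st; rewrite /sigma -count_predT count_sp_nexthops. Qed.

Lemma sigma_tt : sigma t t = 1%N.
Proof. by rewrite /sigma sp_tt. Qed.

Lemma sigma_gt0 s : (0 < sigma s t)%N.
Proof. by rewrite lt0n size_eq0 sp_neq_nil. Qed.

Lemma maxhop_nexthop_lt s u : u \in nexthops s -> (maxhop u t < maxhop s t)%N.
Proof.
move=> nu; have [q sp_q _] := exists_sp_size_le_maxhop u t.
have maxhop_gt0 := leq_trans (ltn0Sn _) (size_le_maxhop (sp_cons nu sp_q)).
rewrite -(prednK maxhop_gt0) ltnS; apply/bigmax_leqP_seq => r sp_r _.
by rewrite -ltnS (prednK maxhop_gt0) (size_le_maxhop (sp_cons nu sp_r)).
Qed.

Lemma nexthops_ind (P : V -> Prop) :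
  (forall s, (forall u, u \in nexthops s -> P u) -> P s) -> forall s, P s.
Proof.
move=> IH s; have [n] := ubnP (maxhop s t); elim: n s => // n IHn s ltsn.
by apply: IH => u nu; apply: IHn; apply: leq_trans (maxhop_nexthop_lt nu) _.
Qed.

Lemma sigma_through_nexthops s x : s != t -> s != x ->
  sigma_through s t x = (\sum_(u in nexthops s) sigma_through u t x)%N.
Proof.
move=> st sx; rewrite /sigma_through count_sp_nexthops //.
by apply: eq_bigr => u _; apply: eq_count => q /=; rewrite in_cons eq_sym (negbTE sx).
Qed.

Lemma sigma_through_t x : x != t -> sigma_through t t x = 0%N.
Proof. by move=> xt; rewrite /sigma_through sp_tt /= inE (negbTE xt). Qed.

Lemma sigma_through_self x : sigma_through x t x = sigma x t.
Proof.
by rewrite /sigma_through /sigma -count_predT; apply: eq_count => p; rewrite /= mem_head.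
Qed.

Lemma sigma_through_prevhop s x : s \in prevhops x -> sigma_through x t s = 0%N.
Proof.
move=> ps; rewrite /sigma_through -(count_pred0 (SP x t)); apply: eq_in_count => p sp_p /=.
rewrite in_cons (negbTE (adj_neq (prevhop_adj ps))) /=.
apply/negbTE/negP => /(spath_suffix (sp_spath sp_p)) [q spq].
rewrite (plen_sp sp_p) ltNge (le_trans _ (dist_le_spath spq)) //.
move: ps; rewrite inE => /andP [xs /eqP <-].
by rewrite lerBlDr lerDl ltW ?w_gt0 // adj_sym.
Qed.

Definition sigma_edge s x v := count (fun p => (x, v) \in zip (s :: p) p) (SP s t).

Lemma sigma_edge_nexthops s x v : s != t -> s != x ->
  sigma_edge s x v = (\sum_(u in nexthops s) sigma_edge u x v)%N.
Proof.
move=> st sx; rewrite /sigma_edge count_sp_nexthops //; apply: eq_bigr => u _.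
by apply: eq_count => q; rewrite /= in_cons xpair_eqE eq_sym (negbTE sx).
Qed.

Lemma sigma_edge_t x v : sigma_edge t x v = 0%N.
Proof. by rewrite /sigma_edge sp_tt. Qed.

Lemma sigma_edge_self x v : sigma_edge x x v = ((v \in nexthops x) * sigma v t)%N.
Proof.
have [-> | xt] := eqVneq x t; first by rewrite sigma_edge_t nexthops_tt inE.
rewrite /sigma_edge count_sp_nexthops //.
transitivity (\sum_(u in nexthops x | u == v) sigma u t)%N.
  rewrite big_mkcondr /=; apply: eq_bigr => u nu; rewrite /sigma -count_predT.
  have [-> | uv] := eqVneq u v; first by apply: eq_count => q; rewrite /= in_cons eqxx.
  rewrite -(count_pred0 (SP u t)); apply: eq_in_count => q sp_q /=.
  rewrite in_cons xpair_eqE eqxx eq_sym (negbTE uv) /=.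
  by apply/negP => /mem_zip /andP [+ _]; apply/negP/(nexthop_notin_sp nu sp_q).
have [nv | nNv] := boolP (v \in nexthops x).
  by rewrite (big_pred1 v) ?mul1n // => u; rewrite andb_idl // => /eqP ->.
by rewrite big_pred0 // => u; apply: contraNF nNv => /andP [nu /eqP <-].
Qed.

Lemma sigma_edge_factor s x v :
  (sigma_edge s x v * sigma x t =
   sigma_through s t x * ((v \in nexthops x) * sigma v t))%N.
Proof.
elim/nexthops_ind: s => s IH.
have [-> | sx] := eqVneq s x; first by rewrite sigma_edge_self sigma_through_self mulnC.
have [est | st] := eqVneq s t.
  by subst s; rewrite sigma_edge_t sigma_through_t // eq_sym.
rewrite sigma_edge_nexthops // sigma_through_nexthops // !big_distrl /=.
by apply: eq_bigr => u nu; rewrite IH.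
Qed.

Lemma sigma_through_prevhops v s : v != t -> s != v ->
  sigma_through s t v = (\sum_(x in prevhops v) sigma_edge s x v)%N.
Proof.
move=> vt; elim/nexthops_ind: s => s IH sv.
have [-> | st] := eqVneq s t.
  by rewrite sigma_through_t // big1 // => x _; rewrite sigma_edge_t.
rewrite sigma_through_nexthops //.
under [RHS]eq_bigr => x _ do rewrite /sigma_edge count_sp_nexthops //.
rewrite exchange_big /=; apply: eq_bigr => u nu.
under eq_bigr => x _ do under eq_count => q do rewrite /= in_cons xpair_eqE.
have [euv | uv] := eqVneq u v; last first.
  by rewrite IH //; apply: eq_bigr => x _; apply: eq_count => q; rewrite andbF.
subst u; have ps : s \in prevhops v by rewrite -nexthops_prevhops.
rewrite sigma_through_self (bigD1 s) //= big1 => [|x /andP [_ xs]].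
  by rewrite addn0 /sigma -count_predT; apply: eq_count => q; rewrite !eqxx.
rewrite (negbTE xs) -(count_pred0 (SP v t)); apply: eq_in_count => q sp_q /=.
apply/negP => /mem_zip /andP [_ vq].
by have /and3P [_ _ /andP [+ _]] := sp_spath sp_q; rewrite vq.
Qed.

Definition dependency v : R :=
  \sum_(s | s != v) (sigma_through s t v)%:R / (sigma s t)%:R.

Lemma sigma_neq0 s : (sigma s t)%:R != 0 :> R.
Proof. by rewrite pnatr_eq0 -lt0n sigma_gt0. Qed.

Lemma sigma_edge_prevhop s x v : x \in prevhops v ->
  (sigma_edge s x v)%:R = (sigma_through s t x)%:R * (sigma v t)%:R / (sigma x t)%:R :> R.
Proof.
rewrite -nexthops_prevhops => nv; have := sigma_edge_factor s x v.
rewrite nv mul1n => /(congr1 (fun n => n%:R : R)); rewrite !natrM => <-.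
by rewrite mulfK ?sigma_neq0.
Qed.

Lemma dependency_prevhop v x : x \in prevhops v ->
  \sum_(s | s != v) (sigma_through s t x)%:R / (sigma s t)%:R = dependency x + 1.
Proof.
move=> px; transitivity (\sum_s (sigma_through s t x)%:R / (sigma s t)%:R : R).
  by rewrite [RHS](bigD1 v) //= sigma_through_prevhop // mul0r add0r.
by rewrite (bigD1 x) //= sigma_through_self divff ?sigma_neq0 // addrC.
Qed.

Lemma dependency_prevhops v : v != t ->
  dependency v =
  (sigma v t)%:R * \sum_(x in prevhops v) (dependency x + 1) / (sigma x t)%:R.
Proof.
move=> vt; rewrite /dependency.
under eq_bigr => s sv do rewrite (sigma_through_prevhops vt sv) natr_sum mulr_suml.
rewrite exchange_big mulr_sumr /=; apply: eq_bigr => x px.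
rewrite (eq_bigr (fun s => (sigma_through s t x)%:R / (sigma s t)%:R *
                          ((sigma v t)%:R / (sigma x t)%:R))) => [|s _].
  by rewrite -mulr_suml dependency_prevhop // mulrCA.
by rewrite sigma_edge_prevhop //; ring.
Qed.

End Target.

Section Phase.
Variables (net : V -> nstate R V) (v : V).

Definition receive st (ut : V * V) :=
  process w v ut.1 ut.2 (Dv (net ut.1) ut.2) (Sv (net ut.1) ut.1 ut.2)
    (Bv (net ut.1) ut.1 ut.2) st.

Definition dep_share (st : nstate R V) t x : R :=
  if Sv st x t == 0 then 0 else (Bv st x t + 1) / Sv st x t.

Definition hops_adj (st : nstate R V) :=
  [forall t, NHv st t :|: PHv st t \subset [set u | adj v u]].

Lemma NH_adj st t x : hops_adj st -> x \in NHv st t -> adj v x.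
Proof.
by move=> /forallP /(_ t) /subsetP /(_ x); rewrite !inE => + xNH; rewrite xNH; apply.
Qed.

Lemma PH_adj st t x : hops_adj st -> x \in PHv st t -> adj v x.
Proof.
by move=> /forallP /(_ t) /subsetP /(_ x); rewrite !inE => + xPH; rewrite xPH orbT; apply.
Qed.

Lemma foldl_receive_S_neighbor L st0 x y : x != v ->
  Sv (foldl receive st0 L) x y = if (x, y) \in L then Sv (net x) x y else Sv st0 x y.
Proof.
move=> xv; elim/last_ind: L => [|L [u t] IH]; rewrite ?foldl_rcons ?mem_rcons //=.
rewrite process_S_neighbor // IH in_cons xpair_eqE.
by case: (eqVneq x u) => [-> | _]; case: (eqVneq y t) => [-> | _].
Qed.

Lemma foldl_receive_B_neighbor L st0 x y : x != v ->
  Bv (foldl receive st0 L) x y = if (x, y) \in L then Bv (net x) x y else Bv st0 x y.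
Proof.
move=> xv; elim/last_ind: L => [|L [u t] IH]; rewrite ?foldl_rcons ?mem_rcons //=.
rewrite process_B_neighbor // IH in_cons xpair_eqE.
by case: (eqVneq x u) => [-> | _]; case: (eqVneq y t) => [-> | _].
Qed.

Lemma foldl_receive_hops_adj L st0 : all (fun ut => adj v ut.1) L ->
  hops_adj st0 -> hops_adj (foldl receive st0 L).
Proof.
elim/last_ind: L => [|L [u t] IH] //; rewrite all_rcons foldl_rcons => /andP [/= vu L_adj].
move=> /(IH L_adj) /forallP hst; apply/forallP => t'; apply/subsetP => x.
by move=> /process_hops /orP [/eqP -> | /(subsetP (hst t'))]; rewrite inE.
Qed.

Lemma receive_D_le st m t : (Dv (receive st m) t <= Dv st t)%E.
Proof. by rewrite process_D; case: ifP => // /andP [/eqP -> /ltW]. Qed.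

Lemma foldl_receive_D_le L st0 t : (Dv (foldl receive st0 L) t <= Dv st0 t)%E.
Proof.
elim/last_ind: L => [|L m IH] //; rewrite foldl_rcons.
exact: le_trans (receive_D_le _ _ _) IH.
Qed.

Lemma foldl_receive_D_le_msg L st0 u t : (u, t) \in L ->
  (Dv (foldl receive st0 L) t <= Dv (net u) t + (w u v)%:E)%E.
Proof.
elim/last_ind: L => [|L [u' t'] IH] //; rewrite foldl_rcons mem_rcons in_cons /=.
case/orP => [/eqP [-> ->] | /IH]; last exact: le_trans (receive_D_le _ _ _).
by rewrite process_D eqxx; case: ifP => //= /negbT; rewrite -leNgt.
Qed.

Lemma foldl_receive_D_ge L st0 (lb : V -> \bar R) :
  (forall t, (lb t <= Dv st0 t)%E) ->
  (forall u t, (u, t) \in L -> (lb t <= Dv (net u) t + (w u v)%:E)%E) ->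
  forall t, (lb t <= Dv (foldl receive st0 L) t)%E.
Proof.
move=> lb_st0; elim/last_ind: L => [|L [u t'] IH] lb_L t //=.
have IH' : forall t, (lb t <= Dv (foldl receive st0 L) t)%E.
  by apply: IH => u' t'' ut; apply: lb_L; rewrite mem_rcons in_cons ut orbT.
rewrite foldl_rcons /= process_D; case: ifP => [/andP [/eqP -> _] | _]; last exact: IH'.
by apply: lb_L; rewrite mem_rcons mem_head.
Qed.

Definition no_improvement (L : seq (V * V)) st0 t :=
  forall u, (u, t) \in L -> ~~ (Dv (net u) t + (w u v)%:E < Dv st0 t)%E.

Lemma no_improvement_rcons L m st0 t :
  no_improvement (rcons L m) st0 t -> no_improvement L st0 t.
Proof. by move=> noimp u ut; apply: noimp; rewrite mem_rcons in_cons ut orbT. Qed.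

Lemma foldl_receive_D_stable L st0 t : no_improvement L st0 t ->
  Dv (foldl receive st0 L) t = Dv st0 t.
Proof.
move=> noimp; apply/le_anti; rewrite foldl_receive_D_le /=.
pose lb a := if a == t then Dv st0 t else -oo%E.
have := foldl_receive_D_ge (lb := lb) _ _ t; rewrite /lb eqxx; apply.
  by move=> a; case: eqP => [-> | _] //; apply: leNye.
move=> u a ua; case: eqP => [ea | _]; last exact: leNye.
by subst a; rewrite leNgt noimp.
Qed.

Lemma foldl_receive_NH L st0 t x : no_improvement L st0 t ->
  x \in NHv (foldl receive st0 L) t =
  if (x, t) \in L then (Dv (net x) t + (w x v)%:E == Dv st0 t)%E else x \in NHv st0 t.
Proof.
elim/last_ind: L => [|L [u t'] IH] noimp //=.
have noimpL := no_improvement_rcons noimp.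
rewrite foldl_rcons /= process_NH mem_rcons in_cons xpair_eqE.
case: (eqVneq t t') => [et | _]; last by rewrite andbF /= IH.
subst t'; rewrite (foldl_receive_D_stable noimpL).
rewrite (negbTE (noimp u _)) ?mem_rcons ?mem_head //=.
case: (eqVneq x u) => [-> | xu] /=; first by case: ifP; rewrite !inE eqxx.
by rewrite -IH //; case: ifP; rewrite !inE (negbTE xu).
Qed.

Lemma foldl_receive_PH L st0 t x : no_improvement L st0 t ->
  x \in PHv (foldl receive st0 L) t =
  if (x, t) \in L then
    (Dv (net x) t + (w x v)%:E != Dv st0 t)%E && (Dv (net x) t - (w x v)%:E == Dv st0 t)%E
  else x \in PHv st0 t.
Proof.
elim/last_ind: L => [|L [u t'] IH] noimp //=.
have noimpL := no_improvement_rcons noimp.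
rewrite foldl_rcons /= process_PH mem_rcons in_cons xpair_eqE.
case: (eqVneq t t') => [et | _]; last by rewrite andbF /= IH.
subst t'; rewrite (foldl_receive_D_stable noimpL).
rewrite (negbTE (noimp u _)) ?mem_rcons ?mem_head //=.
case: (eqVneq x u) => [-> | xu] /=; first by case: ifP; rewrite !inE eqxx.
by rewrite -IH //; case: ifP; rewrite !inE (negbTE xu).
Qed.

Lemma foldl_receive_S_self_self L st0 : all (fun ut => adj v ut.1) L ->
  Sv (foldl receive st0 L) v v = Sv st0 v v.
Proof.
elim/last_ind: L => [|L [u t] IH] //; rewrite all_rcons foldl_rcons => /andP [/= vu L_adj].
by rewrite process_S_self_self ?IH ?adj_neq.
Qed.

Lemma foldl_receive_S_self L st0 t :
  all (fun ut => adj v ut.1) L -> hops_adj st0 -> t != v -> t \in unzip2 L ->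
  Sv (foldl receive st0 L) v t =
  \sum_(x in NHv (foldl receive st0 L) t) Sv (foldl receive st0 L) x t.
Proof.
move=> + hst0 tv; elim/last_ind: L => [|L [u t'] IH] //.
rewrite all_rcons /unzip2 map_rcons mem_rcons in_cons foldl_rcons => /andP [/= vu L_adj].
have := foldl_receive_hops_adj (L := rcons L (u, t')) _ hst0.
rewrite all_rcons vu L_adj foldl_rcons => /(_ isT) hst.
have hstL := foldl_receive_hops_adj L_adj hst0.
case: (eqVneq t t') => [et _ | tt' /= tL].
  subst t'; rewrite /= process_S_self_target //; apply: eq_bigr => x /(NH_adj hst)/adj_neq xv.
  by rewrite process_S_neighbor // eqxx andbT.
rewrite /= process_S_self_other ?(adj_neq vu) // IH //.
rewrite process_NH (negbTE tt'); apply: eq_bigr => x /(NH_adj hstL)/adj_neq xv.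
by rewrite process_S_neighbor // (negbTE tt') andbF.
Qed.

Lemma foldl_receive_B_self L st0 t :
  all (fun ut => adj v ut.1) L -> hops_adj st0 -> t \in unzip2 L ->
  Bv (foldl receive st0 L) v t =
  Sv (foldl receive st0 L) v t *
  \sum_(x in PHv (foldl receive st0 L) t) dep_share (foldl receive st0 L) t x.
Proof.
move=> + hst0; elim/last_ind: L => [|L [u t'] IH] //.
rewrite all_rcons /unzip2 map_rcons mem_rcons in_cons foldl_rcons => /andP [/= vu L_adj].
have := foldl_receive_hops_adj (L := rcons L (u, t')) _ hst0.
rewrite all_rcons vu L_adj foldl_rcons => /(_ isT) hst.
have hstL := foldl_receive_hops_adj L_adj hst0.
case: (eqVneq t t') => [et _ | tt' /= tL].
  subst t'; rewrite /= process_B_self_target; congr (_ * _).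
  apply: eq_bigr => x /(PH_adj hst)/adj_neq xv.
  by rewrite /dep_share process_B_neighbor // eqxx andbT.
rewrite /= process_B_self_other // IH // process_S_self_other ?(adj_neq vu) //.
rewrite process_PH (negbTE tt'); congr (_ * _); apply: eq_bigr => x /(PH_adj hstL)/adj_neq xv.
by rewrite /dep_share process_S_neighbor // process_B_neighbor // (negbTE tt') andbF.
Qed.

Lemma foldl_receive_C L st0 : L != [::] ->
  Cv (foldl receive st0 L) = \sum_(x | x != v) Bv (foldl receive st0 L) v x.
Proof. by case/lastP: L => // L m _; rewrite foldl_rcons process_C. Qed.

End Phase.

Section Run.
Variables (C0 : V -> R) (sched : nat -> V -> seq (V * V)).
Hypothesis sched_inbox : forall k v, perm_eq (sched k v) (inbox adj v).
Hypothesis card_gt1 : (1 < #|V|)%N.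

Local Notation st k v := (run w C0 sched k v).

Lemma runS k v : st k.+1 v = foldl (receive (run w C0 sched k) v) (st k v) (sched k v).
Proof. by []. Qed.

Lemma mem_sched k v u t : ((u, t) \in sched k v) = adj v u.
Proof.
rewrite (perm_mem (sched_inbox k v)) mem_filter /=.
by case: (adj v u) => //=; apply: allpairs_f; rewrite mem_enum.
Qed.

Lemma sched_adj k v : all (fun ut => adj v ut.1) (sched k v).
Proof. by apply/allP => -[u t]; rewrite mem_sched. Qed.

Lemma target_in_sched k v t : t \in unzip2 (sched k v).
Proof.
have [u vu] := exists_neighbor v card_gt1.
by apply/mapP; exists (u, t); rewrite ?mem_sched.
Qed.

Lemma run_hops_adj k v : hops_adj v (st k v).
Proof.
elim: k v => [v | k IH v]; first by apply/forallP => t; rewrite setU0 sub0set.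
exact: foldl_receive_hops_adj (sched_adj k v) (IH v).
Qed.

Lemma run_S_self_self k v : Sv (st k v) v v = 1.
Proof.
elim: k v => [v | k IH v]; first by rewrite /= eqxx.
by rewrite runS foldl_receive_S_self_self ?sched_adj ?IH.
Qed.

Lemma run_D_ge_dist k v t : ((dist v t)%:E <= Dv (st k v) t)%E.
Proof.
elim: k v t => [|k IH] v t /=; first by case: eqP => [-> | _]; rewrite ?dist_tt ?leey.
apply: (foldl_receive_D_ge (lb := fun t => (dist v t)%:E)) => // u t'.
rewrite mem_sched => vu; apply: le_trans (leeD2r _ (IH u t')).
by rewrite -EFinD lee_fin -(w_sym vu) addrC dist_le_adj.
Qed.

Lemma run_D_le_plen k v t p : path adj v p -> last v p = t -> (size p <= k)%N ->
  (Dv (st k v) t <= (plen v p)%:E)%E.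
Proof.
elim: k v p => [|k IH] v [|u p] //; first by move=> _ /= <- _; rewrite eqxx plen0.
  move=> vp vt _; rewrite runS; apply: le_trans (foldl_receive_D_le _ _ _ _ _) _.
  exact: IH.
move=> /andP [vu up] pt pk.
have ut : (u, t) \in sched k v by rewrite mem_sched.
rewrite runS; apply: le_trans (foldl_receive_D_le_msg _ _ _ ut) _.
by rewrite plen_cons (w_sym vu) EFinD addeC leeD2r // IH.
Qed.

Lemma run_D_dist k v t : (maxhop v t <= k)%N -> Dv (st k v) t = (dist v t)%:E.
Proof.
move=> hk; have [p sp_p size_p] := exists_sp_size_le_maxhop v t.
have /and3P [pP /eqP pt _] := sp_spath sp_p.
apply/le_anti; rewrite run_D_ge_dist andbT -(plen_sp sp_p).
exact: run_D_le_plen pP pt (leq_trans size_p hk).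
Qed.

Lemma run_no_improvement k v t : (maxhop v t <= k)%N ->
  no_improvement (run w C0 sched k) v (sched k v) (st k v) t.
Proof.
move=> hk u; rewrite mem_sched -leNgt (run_D_dist hk) => vu.
apply: le_trans (leeD2r _ (run_D_ge_dist k u t)).
by rewrite -EFinD lee_fin -(w_sym vu) addrC dist_le_adj.
Qed.

Lemma run_NH k v t : (maxhop v t <= k)%N -> NHv (st k.+1 v) t = nexthops t v.
Proof.
move=> hk; apply/setP => x; rewrite runS foldl_receive_NH; last exact: run_no_improvement.
rewrite mem_sched (run_D_dist hk) inE; have [vx | vNx] /= := boolP (adj v x); last first.
  by apply/negbTE; apply: contra vNx; apply: NH_adj (run_hops_adj k v).
apply/idP/idP => [| xNH].
  have := run_D_ge_dist k x t; case: (Dv (st k x) t) => [r | | ] //= le_r.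
  rewrite -EFinD eqe lee_fin in le_r * => /eqP rE.
  by have := dist_le_adj t vx; rewrite (w_sym vx) => le_d; apply/eqP; lra.
have xN : x \in nexthops t v by rewrite inE vx.
rewrite (run_D_dist (leq_trans (ltnW (maxhop_nexthop_lt xN)) hk)).
by rewrite -EFinD eqe.
Qed.

Lemma run_PH k v t : (diamD <= k)%N -> PHv (st k.+1 v) t = prevhops t v.
Proof.
move=> hk; have Dconv y : Dv (st k y) t = (dist y t)%:E.
  exact/run_D_dist/(leq_trans (maxhop_le_diam _ _) hk).
apply/setP => x; rewrite runS foldl_receive_PH; last first.
  exact/run_no_improvement/(leq_trans (maxhop_le_diam _ _) hk).
rewrite mem_sched !Dconv inE; have [vx | vNx] /= := boolP (adj v x); last first.
  by apply/negbTE; apply: contra vNx; apply: PH_adj (run_hops_adj k v).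
rewrite -EFinD -EFinB !eqe; apply/andb_idl => /eqP <-.
by have := w_gt0 vx; rewrite (w_sym vx) => w_pos; apply/eqP; lra.
Qed.

Lemma run_hops_adjS k v :
  hops_adj v (foldl (receive (run w C0 sched k) v) (st k v) (sched k v)).
Proof. exact: foldl_receive_hops_adj (sched_adj k v) (run_hops_adj k v). Qed.

Lemma run_S_self k v t : t != v ->
  Sv (st k.+1 v) v t = \sum_(x in NHv (st k.+1 v) t) Sv (st k x) x t.
Proof.
move=> tv; rewrite runS foldl_receive_S_self ?sched_adj ?target_in_sched //; last first.
  exact: run_hops_adj.
apply: eq_bigr => x /(NH_adj (run_hops_adjS k v)) vx.
by rewrite foldl_receive_S_neighbor ?(adj_neq vx) // mem_sched vx.
Qed.

Lemma run_B_self k v t :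
  Bv (st k.+1 v) v t = Sv (st k.+1 v) v t *
    \sum_(x in PHv (st k.+1 v) t) dep_share (st k x) t x.
Proof.
rewrite runS foldl_receive_B_self ?sched_adj ?target_in_sched //; last first.
  exact: run_hops_adj.
congr (_ * _); apply: eq_bigr => x /(PH_adj (run_hops_adjS k v)) vx.
rewrite /dep_share.
by rewrite foldl_receive_S_neighbor ?foldl_receive_B_neighbor ?(adj_neq vx) // mem_sched vx.
Qed.

Lemma run_C k v : Cv (st k.+1 v) = \sum_(x | x != v) Bv (st k.+1 v) v x.
Proof.
rewrite runS foldl_receive_C //.
have [u vu] := exists_neighbor v card_gt1; apply/eqP => sched0.
by have := mem_sched k v u v; rewrite sched0 vu.
Qed.

Lemma run_S_sigma k v t : (v == t) || (maxhop v t < k)%N ->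
  Sv (st k v) v t = (sigma v t)%:R.
Proof.
elim: k v => [|k IH] v; first by rewrite orbF => /eqP <-; rewrite run_S_self_self sigma_tt.
have [<- _ | vt /= hk] := eqVneq v t; first by rewrite run_S_self_self sigma_tt.
rewrite run_S_self 1?eq_sym // run_NH // sigma_nexthops // natr_sum.
apply: eq_bigr => x xN; apply: IH.
by case: eqVneq => //= _; apply: leq_trans (maxhop_nexthop_lt xN) _.
Qed.

(* D, NH and PH are exact after D phases; past that, B[v,t] is exact one phase
   after the B values of its previous hops, whose maxhop to t is larger. *)
Lemma run_B_dependency k v t : v != t ->
  (2 * diamD + 2 <= k + maxhop v t)%N -> Bv (st k v) v t = dependency t v.
Proof.
elim: k v => [|k IH] v vt hk; first by have := maxhop_le_diam v t; lia.
have := maxhop_le_diam v t => hv.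
rewrite run_B_self run_PH ?run_S_sigma ?dependency_prevhops //; last 2 first.
- by apply/orP; right; lia.
- lia.
congr (_ * _); apply: eq_bigr => x px.
have xt := prevhop_neq px; have := maxhop_le_diam x t => hx.
have hvx : (maxhop v t < maxhop x t)%N.
  by apply: maxhop_nexthop_lt; rewrite nexthops_prevhops.
rewrite /dep_share run_S_sigma; last by apply/orP; right; lia.
by rewrite (negbTE (sigma_neq0 t x)) IH //; lia.
Qed.

Lemma run_C_dependency k v : (2 * diamD + 1 <= k)%N ->
  Cv (st k v) = \sum_(t | t != v) dependency t v.
Proof.
case: k => [|k] hk; first by lia.
rewrite run_C; apply: eq_bigr => t tv; rewrite run_B_dependency 1?eq_sym //.
have [p sp_p _] := exists_sp_size_le_maxhop v t.
have : (0 < size p)%N.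
  have /and3P [_ /eqP pt _] := sp_spath sp_p.
  by case: p pt {sp_p} => //= vt; rewrite vt eqxx in tv.
have := size_le_maxhop sp_p; lia.
Qed.
End Run.
End Graph.

Theorem theorem1 (R : realFieldType) (V : finType) (adj : rel V)
    (w : V -> V -> R) (C0 : V -> R) (sched : nat -> V -> seq (V * V)) :
  symmetric adj -> irreflexive adj ->
  (forall u v, adj u v -> w u v = w v u) ->
  (forall u v, adj u v -> 0 < w u v) ->
  (forall s t, connect adj s t) ->
  (2 < #|V|)%N ->
  (forall k v, perm_eq (sched k v) (inbox adj v)) ->
  forall k, (2 * diamD adj w + 1 <= k)%N ->
  forall v : V,
    Cv (run w C0 sched k v) = \sum_(s | s != v) bcs adj w v s /\
    Cv (run w C0 sched k v) = ((#|V| - 1) * (#|V| - 2))%:R * bc adj w v.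
Proof.
move=> adj_sym adj_irr w_sym w_gt0 adj_conn card_gt2 sched_inbox k hk v.
have CE : Cv (run w C0 sched k v) = \sum_(s | s != v) bcs adj w v s.
  rewrite (run_C_dependency adj_sym adj_irr w_sym w_gt0 adj_conn C0 sched_inbox
            (ltnW card_gt2) v hk).
  by rewrite exchange_big.
split=> //; rewrite /bc mulrA mulfV ?mul1r -?CE // pnatr_eq0 muln_eq0.
by apply/norP; split; apply/eqP; lia.
Qed.
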